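(* (ZFC) If $\kappa$ is a singular cardinal, then there is no minimal access ideal on $\kappa$. In particular, for the natural well-ordering $<$ of $\kappa$, $Seg(<)$ is not a minimal access ideal for $\kappa$; more precisely, for every preordering $\preccurlyeq$ of $\kappa$ there is a preordering $\preccurlyeq_1$ of $\kappa$ with $Seg(\preccurlyeq_1)\subsetneq Seg(\preccurlyeq)$.
   Context: An ideal on a set $X$ is a collection $\mathcal I$ of subsets of $X$ such that (i) $Y_1,Y_2\in\mathcal I\Rightarrow Y_1\cup Y_2\in\mathcal I$, (ii) $Y\in\mathcal I$, $Z\subseteq Y\Rightarrow Z\in\mathcal I$, (iii) $X\notin\mathcal I$. A preordering of $X$ is a reflexive, transitive, total binary relation $\preccurlyeq$ on $X$; throughout, all preorderings are assumed to have no last element. For $x\in X$ let ${\preccurlyeq_x}=\{y\in X:y\preccurlyeq x\}$. $Seg(\preccurlyeq)$ denotes the ideal of subsets $Y\subseteq X$ with $Y\subseteq{\preccurlyeq_x}$ for some $x\in X$. An ideal $\mathcal I$ on $X$ is an access ideal for $X$ if there is a preordering $\preccurlyeq$ of $X$ with $Seg(\preccurlyeq)\subseteq\mathcal I$. $\mathcal I$ is a minimal access ideal for $X$ if it is an access ideal for $X$ and for no ideal $\mathcal J\subsetneq\mathcal I$ is $\mathcal J$ an access ideal for $X$. *)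

From Stdlib Require Import Classical.

Section Defs.
Variable X : Type.

Definition family := (X -> Prop) -> Prop.

Definition subset (Y Z : X -> Prop) : Prop := forall x, Y x -> Z x.

Definition is_ideal (I : family) : Prop :=
  (forall Y1 Y2, I Y1 -> I Y2 -> I (fun x => Y1 x \/ Y2 x)) /\
  (forall Y Z, I Y -> subset Z Y -> I Z) /\
  ~ I (fun _ => True).

Definition is_preordering (le : X -> X -> Prop) : Prop :=
  (forall x, le x x) /\
  (forall x y z, le x y -> le y z -> le x z) /\
  (forall x y, le x y \/ le y x) /\
  (forall x, exists y, ~ le y x).

Definition Seg (le : X -> X -> Prop) : family :=
  fun Y => exists x, subset Y (fun y => le y x).

Definition fam_subset (J I : family) : Prop := forall Y, J Y -> I Y.
Definition fam_psubset (J I : family) : Prop :=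
  fam_subset J I /\ exists Y, I Y /\ ~ J Y.

Definition access_ideal (I : family) : Prop :=
  is_ideal I /\ exists le, is_preordering le /\ fam_subset (Seg le) I.

Definition minimal_access_ideal (I : family) : Prop :=
  access_ideal I /\ forall J, fam_psubset J I -> ~ access_ideal J.

Definition card_lt_X (A : X -> Prop) : Prop :=
  ~ exists f : X -> X, (forall x, A (f x)) /\ (forall x y, f x = f y -> x = y).

End Defs.

(* (X, lt) is an infinite cardinal kappa viewed as an initial ordinal with its
   natural well-ordering: lt is a strict well-order, X is infinite, and every
   proper initial segment has cardinality < |X|. *)
Definition infinite_cardinal_order (X : Type) (lt : X -> X -> Prop) : Prop :=
  (forall x, ~ lt x x) /\
  (forall x y z, lt x y -> lt y z -> lt x z) /\
  (forall x y, lt x y \/ x = y \/ lt y x) /\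
  well_founded lt /\
  (exists f : nat -> X, forall n m, f n = f m -> n = m) /\
  (forall x, card_lt_X X (fun y => lt y x)).

(* singular: cf(kappa) < kappa, i.e. some cofinal subset has size < kappa *)
Definition singular (X : Type) (lt : X -> X -> Prop) : Prop :=
  exists C : X -> Prop,
    (forall x, exists c, C c /\ (lt x c \/ x = c)) /\ card_lt_X X C.

(* The heart of the proof is to find a <=-segment {y | y <= x0} and a
   map F sending it onto a <=-unbounded family.  Given x0 and F, the preordering
   y <=1 z :<-> M y <= M z, where M y is a <=-maximum of y and F y, has
   Seg(<=1) inside Seg(<=) (because y <= M y) but misses {y | y <= x0}.

   To find x0 and F we show that an unbounded family indexed by a set S of size
   < |X| can be re-indexed by a <=-segment.  We well-order X by a relation Wr
   whose proper initial segments are <=-bounded; if S injected into no proper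
   Wr-segment, transfinite recursion along Wr would inject X into S.  A small
   unbounded family exists: either some <-initial segment is itself
   <=-unbounded (it is small as |X| is a cardinal), or the <=-bounds of the
   <-segments below a small cofinal set (singularity) form one.

   Since every Seg(<=) thus strictly contains some Seg(<=1), and Seg(<=1) is an
   access ideal, no access ideal is minimal. *)

From Stdlib Require Import Classical ClassicalEpsilon FunctionalExtensionality PropExtensionality.

Definition unbounded_on (X : Type) (le : X -> X -> Prop) (P : X -> Prop) (b : X -> X) : Prop :=
  forall w, exists y, P y /\ ~ le (b y) w.

Lemma bounded_of_not_unbounded (X : Type) (le : X -> X -> Prop) P b :
  ~ unbounded_on X le P b -> exists w, forall y, P y -> le (b y) w.
Proof.
  intro Hnot; apply NNPP; intro Hnone; apply Hnot; intro w.
  apply NNPP; intro Hw; apply Hnone; exists w; intros y Py.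
  apply NNPP; intro Hy; apply Hw; exists y; auto.
Qed.

Lemma reindex_unbounded (X : Type) (le : X -> X -> Prop) (S P : X -> Prop) (b g : X -> X) :
  (forall s, S s -> P (g s)) -> (forall s t, S s -> S t -> g s = g t -> s = t) ->
  unbounded_on X le S b -> exists F, unbounded_on X le P F.
Proof.
  intros Hg Hinj Hb.
  exists (fun y => b (epsilon (inhabits y) (fun s => S s /\ g s = y))).
  intro w; destruct (Hb w) as (s & Ss & Hs).
  exists (g s); split; [exact (Hg s Ss)|].
  destruct (epsilon_spec (inhabits (g s)) (fun s' => S s' /\ g s' = g s)) as [Ss' Es'];
    [exists s; auto|].
  rewrite (Hinj _ _ Ss' Ss Es'); exact Hs.
Qed.

Section InjectionIntoLargeSet.
Variables (X : Type) (W : X -> X -> Prop) (S : X -> Prop).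
Hypothesis W_wf : well_founded W.
Hypothesis W_total : forall y z, y <> z -> W y z \/ W z y.
Hypothesis S_large : forall z (g : X -> X), (forall t, S t -> W (g t) z) ->
  ~ (forall s t, S s -> S t -> g s = g t -> s = t).

Definition emb_step (z : X) (rec : forall y, W y z -> X) : X :=
  epsilon (inhabits z) (fun t => S t /\ forall y (p : W y z), rec y p <> t).

Definition emb : X -> X := Fix W_wf (fun _ => X) emb_step.

Lemma emb_unfold z :
  emb z = epsilon (inhabits z) (fun t => S t /\ forall y, W y z -> emb y <> t).
Proof.
  unfold emb; rewrite Fix_eq; [reflexivity|].
  intros x g h Egh; unfold emb_step; f_equal.
  apply functional_extensionality; intro t; apply propositional_extensionality.
  split; intros [St Hne]; split; auto; intros y p; [rewrite <- Egh | rewrite Egh]; auto.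
Qed.

(* At each stage some element of S is still unused, else S injects below z. *)
Lemma emb_fresh z : exists t, S t /\ forall y, W y z -> emb y <> t.
Proof.
  apply NNPP; intro Hnone.
  assert (Hused : forall t, S t -> exists y, W y z /\ emb y = t).
  { intros t St; apply NNPP; intro Hn; apply Hnone; exists t; split; [exact St|].
    intros y Wyz Et; apply Hn; exists y; auto. }
  set (g := fun t => epsilon (inhabits z) (fun y => W y z /\ emb y = t)).
  assert (Hg : forall t, S t -> W (g t) z /\ emb (g t) = t)
    by (intros t St; exact (epsilon_spec (inhabits z) _ (Hused t St))).
  apply (S_large z g); [intros t St; apply Hg, St|].
  intros s t Ss St Est.
  rewrite <- (proj2 (Hg s Ss)), <- (proj2 (Hg t St)), Est; reflexivity.
Qed.

Lemma emb_spec z : S (emb z) /\ forall y, W y z -> emb y <> emb z.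
Proof.
  pose proof (epsilon_spec (inhabits z) _ (emb_fresh z)) as Hspec.
  rewrite <- emb_unfold in Hspec; exact Hspec.
Qed.

Lemma inject_into_large :
  exists f : X -> X, (forall x, S (f x)) /\ (forall x y, f x = f y -> x = y).
Proof.
  exists emb; split; [intro x; apply emb_spec|].
  intros x y Exy; apply NNPP; intro Hne.
  destruct (W_total x y Hne) as [Wxy | Wyx].
  - exact (proj2 (emb_spec y) x Wxy Exy).
  - exact (proj2 (emb_spec x) y Wyx (eq_sym Exy)).
Qed.
End InjectionIntoLargeSet.

Section Preorder.
Variables (X : Type) (le : X -> X -> Prop).
Hypothesis le_pre : is_preordering X le.

Definition le_max (a b : X) : X := if excluded_middle_informative (le a b) then b else a.

Lemma le_max_ub a b : le a (le_max a b) /\ le b (le_max a b).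
Proof.
  destruct le_pre as (le_refl & _ & le_total & _).
  unfold le_max; destruct (excluded_middle_informative (le a b)) as [Hab | Hab].
  - auto.
  - split; [apply le_refl|]. destruct (le_total a b); tauto.
Qed.

Lemma pullback_preordering (M : X -> X) : (forall y, le y (M y)) ->
  is_preordering X (fun y z => le (M y) (M z)) /\
  fam_subset X (Seg X (fun y z => le (M y) (M z))) (Seg X le).
Proof.
  intro M_infl; destruct le_pre as (le_refl & le_trans & le_total & le_nolast).
  split; [split; [|split; [|split]]|].
  - intro; apply le_refl.
  - intros x y z; apply le_trans.
  - intros x y; apply le_total.
  - intro x; destruct (le_nolast (M x)) as [y Hy]; exists y.
    intro Hyx; apply Hy, (le_trans _ (M y)); auto.
  - intros Y [x Hx]; exists (M x); intros y Yy.
    apply (le_trans _ (M y)); auto.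
Qed.

(* An unbounded image of a segment {y | le y x0} yields a preordering whose Seg
   is strictly smaller: the pullback along y |-> max(y, F y) misses that segment. *)
Lemma refine_preordering x0 F : unbounded_on X le (fun y => le y x0) F ->
  exists le1, is_preordering X le1 /\ fam_psubset X (Seg X le1) (Seg X le).
Proof.
  intro HF; set (M := fun y => le_max y (F y)).
  destruct (pullback_preordering M) as [Hpre Hsub]; [intro y; apply le_max_ub|].
  exists (fun y z => le (M y) (M z)); split; [exact Hpre|]; split; [exact Hsub|].
  destruct le_pre as (le_refl & le_trans & _ & _).
  exists (fun y => le y x0); split; [exists x0; intros y Hy; exact Hy|].
  intros [z Hz]; destruct (HF (M z)) as (y & Hy & HFy).
  apply HFy, (le_trans _ (M y)); [apply le_max_ub | exact (Hz y Hy)].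
Qed.
End Preorder.

Section UnboundedSegmentImage.
Variables (X : Type) (lt le : X -> X -> Prop).
Hypothesis lt_trichotomy : forall x y, lt x y \/ x = y \/ lt y x.
Hypothesis lt_wf : well_founded lt.
Hypothesis le_pre : is_preordering X le.

Lemma lt_least (P : X -> Prop) :
  (exists y, P y) -> exists k, P k /\ forall y, lt y k -> ~ P y.
Proof.
  intros [y Py]; apply NNPP; intro Hnone; revert Py.
  induction y as [z IH] using (well_founded_ind lt_wf); intro Pz.
  apply Hnone; exists z; split; [exact Pz|]; intros y Hy Py; exact (IH y Hy Py).
Qed.

Definition escape (z : X) : X :=
  epsilon (inhabits z) (fun k => ~ le k z /\ forall y, lt y k -> le y z).

Lemma escape_spec z : le z (escape z) /\ forall y, lt y (escape z) -> le y z.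
Proof.
  destruct le_pre as (_ & _ & le_total & le_nolast).
  assert (Hex : exists k, ~ le k z /\ forall y, lt y k -> le y z).
  { destruct (lt_least (fun k => ~ le k z) (le_nolast z)) as (k & Hk & Hmin).
    exists k; split; [exact Hk|]; intros y Hy; apply NNPP, Hmin, Hy. }
  destruct (epsilon_spec (inhabits z) _ Hex) as [Hnot Hbelow]; fold (escape z) in Hnot, Hbelow.
  split; [destruct (le_total z (escape z)); tauto | exact Hbelow].
Qed.

(* X ordered lexicographically by (escape y, y): a well-ordering whose proper
   initial segments are le-bounded. *)
Definition Wr (y z : X) : Prop := lt (escape y) (escape z) \/ (escape y = escape z /\ lt y z).

Lemma Wr_wf : well_founded Wr.
Proof.
  intro z; remember (escape z) as a eqn:Ea; revert z Ea.
  induction a as [a IHa] using (well_founded_ind lt_wf).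
  intro z; induction z as [z IHz] using (well_founded_ind lt_wf); intro Ea.
  constructor; intros y [Hy | [Ey Hy]].
  - apply (IHa (escape y)); [subst; exact Hy | reflexivity].
  - apply IHz; [exact Hy | congruence].
Qed.

Lemma Wr_total y z : y <> z -> Wr y z \/ Wr z y.
Proof.
  intro Hne; unfold Wr.
  destruct (lt_trichotomy (escape y) (escape z)) as [H | [H | H]]; auto.
  destruct (lt_trichotomy y z) as [H' | [H' | H']]; auto; contradiction.
Qed.

Lemma Wr_bound y z : Wr y z -> le y (escape z).
Proof.
  destruct le_pre as (_ & le_trans & _ & _).
  intros [H | [E _]].
  - apply (le_trans _ z); [| exact (proj1 (escape_spec z))].
    apply (le_trans _ (escape y)); [exact (proj1 (escape_spec y)) | exact (proj2 (escape_spec z) _ H)].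
  - rewrite <- E; exact (proj1 (escape_spec y)).
Qed.

(* A small unbounded family can be re-indexed by a le-segment: otherwise S
   injects into no proper Wr-segment, and then X injects into S. *)
Lemma small_unbounded_family (S : X -> Prop) (b : X -> X) :
  card_lt_X X S -> unbounded_on X le S b ->
  exists x0 F, unbounded_on X le (fun y => le y x0) F.
Proof.
  intros S_small Hb.
  destruct (classic (exists z g, (forall t, S t -> Wr (g t) z) /\
                        (forall s t, S s -> S t -> g s = g t -> s = t)))
    as [(z & g & Hg & Hinj) | Hnone].
  - exists (escape z).
    apply (reindex_unbounded X le S _ b g); auto.
    intros s Ss; apply Wr_bound, Hg, Ss.
  - exfalso; apply S_small, (inject_into_large X Wr S Wr_wf Wr_total).
    intros z g Hg Hinj; apply Hnone; exists z, g; auto.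
Qed.

Hypothesis lt_segments_small : forall x, card_lt_X X (fun y => lt y x).
Variable C : X -> Prop.
Hypothesis C_cofinal : forall x, exists c, C c /\ (lt x c \/ x = c).
Hypothesis C_small : card_lt_X X C.

Lemma unbounded_segment_image : exists x0 F, unbounded_on X le (fun y => le y x0) F.
Proof.
  destruct le_pre as (_ & le_trans & _ & le_nolast).
  destruct (classic (exists x, unbounded_on X le (fun y => lt y x) (fun y => y)))
    as [[x Hx] | Hall].
  - exact (small_unbounded_family _ _ (lt_segments_small x) Hx).
  - assert (Hbound : forall c, exists m, forall y, lt y c \/ y = c -> le y m).
    { intro c.
      destruct (bounded_of_not_unbounded X le (fun y => lt y c) (fun y => y))
        as [w Hw]; [intro Hc; apply Hall; exists c; exact Hc|].
      exists (le_max X le w c); intros y [Hy | <-].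
      - apply (le_trans _ w); [exact (Hw y Hy) | apply le_max_ub, le_pre].
      - apply le_max_ub, le_pre. }
    set (bound := fun c => epsilon (inhabits c)
                             (fun m => forall y, lt y c \/ y = c -> le y m)).
    apply (small_unbounded_family C bound C_small).
    intro w; destruct (le_nolast w) as [y Hy].
    destruct (C_cofinal y) as (c & Cc & Hyc).
    exists c; split; [exact Cc|]; intro Hcw; apply Hy.
    apply (le_trans _ (bound c)); [exact (epsilon_spec (inhabits c) _ (Hbound c) y Hyc) | exact Hcw].
Qed.
End UnboundedSegmentImage.

Lemma Seg_is_ideal (X : Type) (le : X -> X -> Prop) :
  is_preordering X le -> is_ideal X (Seg X le).
Proof.
  intros (le_refl & le_trans & le_total & le_nolast); split; [|split].
  - intros Y1 Y2 [a Ha] [b Hb]; destruct (le_total a b) as [Hab | Hba].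
    + exists b; intros y [Hy | Hy]; [apply (le_trans _ a) | ]; auto.
    + exists a; intros y [Hy | Hy]; [ | apply (le_trans _ b)]; auto.
  - intros Y Z [a Ha] HZ; exists a; intros y Hy; auto.
  - intros [a Ha]; destruct (le_nolast a) as [y Hy]; exact (Hy (Ha y I)).
Qed.

Lemma no_minimal_access_ideal (X : Type) :
  (forall le, is_preordering X le ->
     exists le1, is_preordering X le1 /\ fam_psubset X (Seg X le1) (Seg X le)) ->
  forall I : family X, ~ minimal_access_ideal X I.
Proof.
  intros Hshrink I [[_ (le & Hle & HsegI)] Hmin].
  destruct (Hshrink le Hle) as (le1 & Hle1 & Hsub & Y & HY & HnY).
  apply (Hmin (Seg X le1)).
  - split; [intros Z HZ; apply HsegI, Hsub, HZ | exists Y; split; [apply HsegI, HY | exact HnY]].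
  - split; [apply Seg_is_ideal, Hle1 | exists le1; split; [exact Hle1 | intros Z HZ; exact HZ]].
Qed.

Theorem theorem2p11 (X : Type) (lt : X -> X -> Prop)
  (Hcard : infinite_cardinal_order X lt) (Hsing : singular X lt) :
  (forall I : family X, ~ minimal_access_ideal X I) /\
  ~ minimal_access_ideal X (Seg X (fun x y => ~ lt y x)) /\
  (forall le : X -> X -> Prop, is_preordering X le ->
     exists le1 : X -> X -> Prop, is_preordering X le1 /\
       fam_psubset X (Seg X le1) (Seg X le)).
Proof.
  destruct Hcard as (_ & _ & lt_trichotomy & lt_wf & _ & lt_segments_small).
  destruct Hsing as (C & C_cofinal & C_small).
  assert (Hshrink : forall le, is_preordering X le ->
            exists le1, is_preordering X le1 /\ fam_psubset X (Seg X le1) (Seg X le)).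
  { intros le Hle.
    destruct (unbounded_segment_image X lt le lt_trichotomy lt_wf Hle
                lt_segments_small C C_cofinal C_small) as (x0 & F & HF).
    exact (refine_preordering X le Hle x0 F HF). }
  pose proof (no_minimal_access_ideal X Hshrink) as Hno_min.
  split; [exact Hno_min | split; [apply Hno_min | exact Hshrink]].
Qed.
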